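(* The tree $T_A$ has proper thinness equal to $3$.
   Context: For a graph $G=(V,E)$, a linear ordering $<$ of $V$ and a partition of $V$ into classes are called strongly consistent if for every triple $r<s<t$ of vertices with $rt\in E$: if $r$ and $s$ belong to the same class then $st\in E$, and if $s$ and $t$ belong to the same class then $rs\in E$. The proper thinness $\mathrm{pthin}(G)$ is the minimum $k$ such that some ordering of $V$ and some partition of $V$ into $k$ classes are strongly consistent. $T_0$ is the subdivided star $K_{1,5}$: a center adjacent to five vertices, each of which is adjacent to one further leaf (11 vertices). $T_A$ is the tree obtained from three disjoint copies of $T_0$ and a new vertex $v_0$ by making $v_0$ adjacent to one leaf of each copy (34 vertices; $v_0$ is at distance $3$ from each copy's center). *)

From mathcomp Require Import all_boot.
Set Implicit Arguments. Unset Strict Implicit. Unset Printing Implicit Defensive.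

(* A simple graph on a finite vertex type T is given by an edge relation e
   (intended symmetric and irreflexive).
   A linear ordering of V is given by an injective map ord : T -> nat
   (r < s  iff  ord r < ord s); a partition of V into (at most) k classes
   is given by a class map cls : T -> 'I_k. *)

Definition strongly_consistent (T : finType) (e : rel T)
    (ord : T -> nat) (k : nat) (cls : T -> 'I_k) : Prop :=
  forall r s t : T, ord r < ord s -> ord s < ord t -> e r t ->
    (cls r = cls s -> e s t) /\ (cls s = cls t -> e r s).

Definition proper_k_thin (T : finType) (e : rel T) (k : nat) : Prop :=
  exists (ord : T -> nat) (cls : T -> 'I_k),
    injective ord /\ strongly_consistent e ord cls.

Definition pthin_eq (T : finType) (e : rel T) (k : nat) : Prop :=
  proper_k_thin e k /\ forall k', proper_k_thin e k' -> k <= k'.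

(* T_0: subdivided star K_{1,5} on 'I_11: center 0, middle vertices 1..5,
   leaf j+5 attached to middle vertex j. *)
Definition T0_arc (x y : 'I_11) : bool :=
  ((val x == 0) && (1 <= val y <= 5)) ||
  ((1 <= val x <= 5) && (val y == val x + 5)).

Definition T0_edge (x y : 'I_11) : bool := T0_arc x y || T0_arc y x.

(* T_A: vertices are None (= v_0) and Some (i, x) = vertex x of copy i.
   v_0 is adjacent to the leaf 6 of each copy. *)
Definition TA_vertex := option ('I_3 * 'I_11)%type.

Definition TA_edge (u v : TA_vertex) : bool :=
  match u, v with
  | Some (i, x), Some (j, y) => (i == j) && T0_edge x y
  | None, Some (_, y) => val y == 6
  | Some (_, x), None => val x == 6
  | None, None => false
  end.

From mathcomp Require Import all_boot zify zmodp.
Set Implicit Arguments. Unset Strict Implicit. Unset Printing Implicit Defensive.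

(* Upper bound: an explicit ordering of T_A with three classes, checked by
   computation.  Lower bound: T_0 is an induced subgraph of T_A and proper
   thinness is monotone under induced subgraphs, so it suffices that T_0 has no
   strongly consistent ordering with two classes.  Using the symmetries of the
   problem (permuting the five branches of T_0, reversing the ordering,
   swapping the two classes) we may assume that the middle vertices appear in
   increasing order, that the center precedes the third middle vertex and that
   the first vertex is in class 0; an exhaustive search over the orderings
   built vertex by vertex under these constraints finds none. *)

Section ConsistencyTransport.
Variables (T : finType) (e : rel T).

Lemma strongly_consistent_comp (U : finType) (e' : rel U) (f : U -> T)
    (ord : T -> nat) k (cls : T -> 'I_k) :
  (forall x y, e (f x) (f y) = e' x y) ->
  strongly_consistent e ord cls -> strongly_consistent e' (ord \o f) (cls \o f).
Proof. by move=> ef sc r s t rs st; rewrite -!ef; apply: sc. Qed.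

Lemma strongly_consistent_relabel (ord : T -> nat) k k' (cls : T -> 'I_k)
    (g : 'I_k -> 'I_k') :
  injective g -> strongly_consistent e ord cls -> strongly_consistent e ord (g \o cls).
Proof.
by move=> g_inj sc r s t rs st ert; have [? ?] := sc r s t rs st ert; split=> /g_inj.
Qed.

Lemma strongly_consistent_rev (ord : T -> nat) k (cls : T -> 'I_k) M :
  symmetric e -> (forall x, ord x <= M) ->
  strongly_consistent e ord cls -> strongly_consistent e (fun x => M - ord x) cls.
Proof.
move=> e_sym leM sc r s t rs st ert.
have := leM r; have := leM s; have := leM t => leMt leMs leMr.
have [ts sr] := sc t s r ltac:(lia) ltac:(lia) ltac:(by rewrite e_sym).
by split=> ?; rewrite e_sym; [apply: sr | apply: ts].
Qed.

Lemma proper_thin_widen k k' : k <= k' -> proper_k_thin e k -> proper_k_thin e k'.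
Proof.
move=> le_kk' [ord [cls [ord_inj sc]]]; exists ord, (widen_ord le_kk' \o cls).
split=> //; apply: strongly_consistent_relabel sc => i j /(congr1 val) /=.
exact: val_inj.
Qed.

Lemma proper_thin_induced (U : finType) (e' : rel U) (f : U -> T) k :
  injective f -> (forall x y, e (f x) (f y) = e' x y) ->
  proper_k_thin e k -> proper_k_thin e' k.
Proof.
move=> f_inj ef [ord [cls [ord_inj sc]]]; exists (ord \o f), (cls \o f).
by split; [exact: inj_comp | exact: strongly_consistent_comp].
Qed.

End ConsistencyTransport.

Lemma sort_pairwise_ltn (U : eqType) (ord : U -> nat) s :
  {in s &, injective ord} -> uniq s ->
  pairwise (fun x y => ord x < ord y) (sort (fun x y => ord x <= ord y) s).
Proof.
move=> ord_inj s_uniq; set t := sort _ s.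
have t_sorted : pairwise (fun x y => (x != y) && (ord x <= ord y)) t.
  rewrite (pairwise_relI (fun x y => x != y)) -uniq_pairwise sort_uniq s_uniq.
  rewrite -sorted_pairwise ?sort_sorted // => [x y|y x z];
    [apply: leq_total | apply: leq_trans].
apply: (sub_in_pairwise (P := mem s)) t_sorted; last by apply/allP => x; rewrite mem_sort.
move=> x y xs ys /andP[x_neq_y le_xy]; rewrite ltn_neqAle le_xy andbT.
by apply: contra x_neq_y => /eqP/ord_inj ->.
Qed.

Section Placements.
Variables (T : eqType) (e : rel T).

(* A placement lists (vertex, class) pairs in increasing order of the vertices. *)
Definition consistent_triple (x y z : T * nat) : bool :=
  e x.1 z.1 ==> ((x.2 == y.2) ==> e y.1 z.1) && ((y.2 == z.2) ==> e x.1 y.1).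

(* Equal to [pairwise (consistent_triple^~ z) p] (lemma [extends_consistentlyE]),
   but written with [if]s so that evaluation by [vm_compute] short-circuits. *)
Fixpoint extends_consistently (p : seq (T * nat)) (z : T * nat) : bool :=
  if p is x :: p' then
    if e x.1 z.1 then
      if all (fun y => ((x.2 == y.2) ==> e y.1 z.1) && ((y.2 == z.2) ==> e x.1 y.1)) p'
      then extends_consistently p' z else false
    else extends_consistently p' z
  else true.

Lemma extends_consistentlyE p z :
  extends_consistently p z = pairwise (fun x y => consistent_triple x y z) p.
Proof.
elim: p => //= x p ->; rewrite /consistent_triple; case: (e x.1 z.1) => /=.
  by case: all.
by rewrite all_predT.
Qed.

Fixpoint all_prefixes (P : seq (T * nat) -> T * nat -> bool) p s : bool :=
  if s is z :: s' then P p z && all_prefixes P (rcons p z) s' else true.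

Lemma all_prefixes_consistent_triples p s x0 i j l :
  all_prefixes extends_consistently p s -> size p <= l ->
  i < j -> j < l -> l < size (p ++ s) ->
  consistent_triple (nth x0 (p ++ s) i) (nth x0 (p ++ s) j) (nth x0 (p ++ s) l).
Proof.
elim: s p => [|z s IH] p; first by rewrite cats0; lia.
move=> /= /andP[ext rest] le_pl ij jl l_lt.
have [lt_pl|eq_pl] : size p < l \/ size p = l by lia.
  by rewrite -cat_rcons; apply: IH; rewrite ?size_rcons ?cat_rcons.
subst l; rewrite !nth_cat ltnn subnn jl (ltn_trans ij jl) /=.
by move: ext; rewrite extends_consistentlyE => /(pairwiseP x0) -> //; rewrite inE; lia.
Qed.

Lemma all_prefixes_sorted (U : eqType) (ord : U -> nat) (f : U -> T * nat)
    (P : seq (T * nat) -> T * nat -> bool) s :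
  pairwise (fun x y => ord x < ord y) s ->
  (forall x, x \in s -> P [seq f y | y <- s & ord y < ord x] (f x)) ->
  all_prefixes P [::] (map f s).
Proof.
move=> s_sorted Ps.
suff: forall q r, q ++ r = s -> all_prefixes P (map f q) (map f r).
  by move=> /(_ [::] s erefl).
move=> q r; elim: r q => [//|x r IH] q def_s /=.
rewrite -map_rcons IH ?cat_rcons // andbT.
suff <- : [seq y <- s | ord y < ord x] = q by apply: Ps; rewrite -def_s mem_cat mem_head orbT.
move: s_sorted; rewrite -def_s pairwise_cat allrel_consr /=.
move=> /and3P[/andP[qx _] _ /andP[xr _]].
rewrite filter_cat (all_filterP qx) /= ltnn (@eq_in_filter _ _ pred0 r) ?filter_pred0 //.
  by rewrite cats0.
by move=> y /(allP xr) /= xy; apply/negbTE; rewrite -leqNgt ltnW.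
Qed.

Lemma strongly_consistent_placement (U : finType) (eU : rel U) (g : U -> T)
    (ord : U -> nat) k (cls : U -> 'I_k) s :
  (forall x y, e (g x) (g y) = eU x y) -> strongly_consistent eU ord cls ->
  pairwise (fun x y => ord x < ord y) s ->
  all_prefixes extends_consistently [::] [seq (g x, val (cls x)) | x <- s].
Proof.
move=> eg sc s_sorted; apply: (all_prefixes_sorted s_sorted) => t _.
rewrite extends_consistentlyE pairwise_map.
apply: (sub_in_pairwise (P := fun y => ord y < ord t)) (pairwise_filter _ s_sorted).
  move=> r u rt ut ru; rewrite /consistent_triple /= !eg; apply/implyP => ert.
  have [ut_of_ru ru_of_ut] := sc r u t ru ut ert.
  by apply/andP; split; apply/implyP => /eqP/val_inj; [apply: ut_of_ru | apply: ru_of_ut].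
by apply/allP => y; rewrite mem_filter => /andP[].
Qed.

End Placements.

Lemma placement_proper_thin (T : finType) (e : rel T) k (s : seq (T * nat)) :
  uniq (unzip1 s) -> (forall x, x \in unzip1 s) -> all (fun z => z.2 < k.+1) s ->
  all_prefixes (extends_consistently e) [::] s -> proper_k_thin e k.+1.
Proof.
move=> s_uniq s_total s_cls s_consistent.
pose pos x := index x (unzip1 s); pose class x := nth 0 (unzip2 s) (pos x).
have pos_lt x : pos x < size s by rewrite -(size_map fst) index_mem.
have nthE r x : nth (r, 0) s (pos x) = (x, class x).
  rewrite [LHS]surjective_pairing /class (nth_map (r, 0)) //; congr (_, _).
  by rewrite -(nth_map (r, 0) r) // nth_index.
have class_lt x : class x < k.+1.
  by have := all_nthP (x, 0) s_cls _ (pos_lt x); rewrite nthE.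
exists pos, (fun x => inord (class x)).
split=> [x y /(congr1 (nth x (unzip1 s)))|r u t ru ut ert]; first by rewrite /pos !nth_index.
have := all_prefixes_consistent_triples (r, 0) s_consistent (leq0n _) ru ut (pos_lt t).
rewrite /= !nthE /consistent_triple /= ert => /andP[cls_ru cls_ut].
by split=> /(congr1 (@nat_of_ord _)); rewrite !inordK // => /eqP;
  [apply: (implyP cls_ru) | apply: (implyP cls_ut)].
Qed.

Section Search.
Variables (T : eqType) (e : rel T) (vs : seq T) (k : nat)
  (admissible : seq (T * nat) -> T * nat -> bool).

Fixpoint search (n : nat) (p : seq (T * nat)) : bool :=
  if n is n'.+1 then
    has (fun t => if t \notin unzip1 p then
      has (fun c => if admissible p (t, c) then
        if extends_consistently e p (t, c) then search n' (rcons p (t, c)) else false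
        else false) (iota 0 k)
      else false) vs
  else true.

Lemma search_complete p s :
  all (fun z => (z.1 \in vs) && (z.2 < k)) s -> uniq (unzip1 (p ++ s)) ->
  all_prefixes admissible p s -> all_prefixes (extends_consistently e) p s ->
  search (size s) p.
Proof.
elim: s p => [//|[t c] s IH] p /= /andP[/andP[t_vs c_lt] s_ok] s_uniq.
move=> /andP[adm_tc adm_s] /andP[ext_tc ext_s].
apply/hasP; exists t => //.
have t_fresh : t \notin unzip1 p.
  by move: s_uniq; rewrite /unzip1 map_cat cat_uniq /= negb_or => /and3P[_ /andP[]].
rewrite t_fresh; apply/hasP; exists c; first by rewrite mem_iota.
by rewrite adm_tc ext_tc IH // cat_rcons.
Qed.

End Search.

(* T_0 on the indices of its vertices, in a form that evaluates quickly. *)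
Definition T0_nbrs (x : nat) : seq nat :=
  match x with
  | 0 => [:: 1; 2; 3; 4; 5]
  | 1 => [:: 0; 6] | 2 => [:: 0; 7] | 3 => [:: 0; 8] | 4 => [:: 0; 9] | 5 => [:: 0; 10]
  | 6 => [:: 1] | 7 => [:: 2] | 8 => [:: 3] | 9 => [:: 4] | 10 => [:: 5]
  | _ => [::]
  end.

Definition T0_adj (x y : nat) : bool := y \in T0_nbrs x.

Lemma T0_edgeE (x y : 'I_11) : T0_edge x y = T0_adj x y.
Proof.
pose arc (x y : nat) := ((x == 0) && (1 <= y <= 5)) || ((1 <= x <= 5) && (y == x + 5)).
have table : all (fun x => all (fun y => (arc x y || arc y x) == T0_adj x y)
                                (iota 0 11)) (iota 0 11) by [].
case: x y => [x lt_x] [y lt_y]; apply/eqP.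
move/allP: table => /(_ x); rewrite mem_iota => /(_ lt_x) /allP /(_ y).
by rewrite mem_iota; apply.
Qed.

Lemma T0_edge_sym : symmetric T0_edge.
Proof. by move=> x y; rewrite /T0_edge orbC. Qed.

(* The normalisation of [T0_normal] below, together with "the first vertex has
   class 0", as a condition on the next vertex placed after [p]. *)
Definition T0_admissible (p : seq (nat * nat)) (z : nat * nat) : bool :=
  [&& nilp p ==> (z.2 == 0), (1 < z.1 <= 5) ==> (z.1.-1 \in unzip1 p)
    & (z.1 == 3) ==> (0 \in unzip1 p)].

Definition branch_relabel (pi : seq nat) (x : nat) : nat :=
  if x == 0 then 0
  else if x <= 5 then nth 0 pi x.-1
  else if x <= 10 then nth 0 pi (x - 6) + 5 else x.

Definition branch_perm (pi : seq nat) (x : 'I_11) : 'I_11 := inord (branch_relabel pi x).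

Lemma branch_perm_auto pi : pi \in permutations (iota 1 5) ->
  injective (branch_perm pi) /\
  forall x y, T0_edge (branch_perm pi x) (branch_perm pi y) = T0_edge x y.
Proof.
have table : all (fun pi => all (fun x => (branch_relabel pi x < 11) && all (fun y =>
    ((branch_relabel pi x == branch_relabel pi y) ==> (x == y)) &&
    (T0_adj (branch_relabel pi x) (branch_relabel pi y) == T0_adj x y))
    (iota 0 11)) (iota 0 11)) (permutations (iota 1 5)).
  by vm_compute.
move=> /(allP table) /allP table_pi.
have mem_iota_ord (x : 'I_11) : val x \in iota 0 11 by rewrite mem_iota ltn_ord.
have entry (x y : 'I_11) : [&& branch_relabel pi x < 11,
    (branch_relabel pi x == branch_relabel pi y) ==> (x == y :> nat) &
    T0_adj (branch_relabel pi x) (branch_relabel pi y) == T0_adj x y].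
  have /andP[-> /allP/(_ y)] := table_pi x (mem_iota_ord x).
  by move=> /(_ (mem_iota_ord y)).
have valE x : branch_perm pi x = branch_relabel pi x :> nat.
  by rewrite inordK //; case/and3P: (entry x x).
split=> [x y /(congr1 (@nat_of_ord _))|x y].
  rewrite !valE => /eqP eq_xy; apply/val_inj/eqP.
  by case/and3P: (entry x y) => _ /implyP/(_ eq_xy).
by rewrite !T0_edgeE !valE; case/and3P: (entry x y) => _ _ /eqP.
Qed.

Lemma branch_perm_middle pi m : 0 < m <= 5 ->
  branch_perm pi (inord m) = inord (nth 0 pi m.-1).
Proof.
move=> /andP[m_gt0 m_le5]; rewrite /branch_perm /branch_relabel inordK; last lia.
by rewrite eqn0Ngt m_gt0 m_le5.
Qed.

Lemma branch_perm_center pi : branch_perm pi (inord 0) = inord 0.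
Proof. by rewrite /branch_perm /branch_relabel inordK. Qed.

Definition T0_normal (ord : 'I_11 -> nat) (cls : 'I_11 -> 'I_2) : Prop :=
  [/\ injective ord, strongly_consistent T0_edge ord cls,
      forall m, 0 < m < 5 -> ord (inord m) < ord (inord m.+1)
    & ord (inord 0) < ord (inord 3)].

Section NormalForm.
Variables (ord : 'I_11 -> nat) (cls : 'I_11 -> 'I_2).
Hypotheses (ord_inj : injective ord) (sc : strongly_consistent T0_edge ord cls).

Lemma relabel_branches pi : pi \in permutations (iota 1 5) ->
  injective (ord \o branch_perm pi) /\
  strongly_consistent T0_edge (ord \o branch_perm pi) (cls \o branch_perm pi).
Proof.
case/branch_perm_auto => bp_inj bp_edge.
by split; [exact: inj_comp | exact: strongly_consistent_comp].
Qed.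

Lemma sorted_branches : exists2 pi, pi \in permutations (iota 1 5) &
  forall m, 0 < m < 5 -> ord (branch_perm pi (inord m)) < ord (branch_perm pi (inord m.+1)).
Proof.
pose le_mid i j := ord (inord i) <= ord (inord j).
have pi_perm : sort le_mid (iota 1 5) \in permutations (iota 1 5).
  by rewrite mem_permutations perm_sort.
exists (sort le_mid (iota 1 5)) => // m m_mid.
have [bp_inj _] := relabel_branches pi_perm.
rewrite ltn_neqAle (inj_eq bp_inj); apply/andP; split.
  by apply/eqP => /(congr1 (@nat_of_ord _)); rewrite !inordK; lia.
rewrite /= !branch_perm_middle; try lia.
have le_mid_sorted : sorted le_mid (sort le_mid (iota 1 5)).
  exact: (sort_sorted (fun i j => leq_total _ _)).
have le_mid_trans : transitive le_mid by move=> ? ? ?; apply: leq_trans.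
have := sorted_leq_nth le_mid_trans (fun _ => leqnn _) 0 le_mid_sorted m.-1 m.
by rewrite !inE !size_sort !size_iota => /(_ ltac:(lia) ltac:(lia) ltac:(lia)).
Qed.

Lemma reverse_branches :
  (forall m, 0 < m < 5 -> ord (inord m) < ord (inord m.+1)) ->
  ord (inord 3) < ord (inord 0) -> exists ord' cls', T0_normal ord' cls'.
Proof.
move=> incr center_last; set rho := [:: 5; 4; 3; 2; 1].
have rho_perm : rho \in permutations (iota 1 5) by rewrite mem_permutations.
have [inj_rho sc_rho] := relabel_branches rho_perm.
have rhoE m : 0 < m <= 5 -> branch_perm rho (inord m) = inord (6 - m).
  by move=> m_mid; rewrite branch_perm_middle //; case: m m_mid => [|[|[|[|[|[|m]]]]]].
pose M := \max_y ord y; have le_M y : ord y <= M := leq_bigmax y.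
exists (fun x => M - ord (branch_perm rho x)), (cls \o branch_perm rho); split.
- move=> x y eq_xy; apply: inj_rho => /=.
  by have := le_M (branch_perm rho x); have := le_M (branch_perm rho y); lia.
- exact: strongly_consistent_rev T0_edge_sym (fun x => le_M _) sc_rho.
- move=> m m_mid; rewrite !rhoE; try lia.
  have := incr (5 - m) ltac:(lia).
  rewrite (_ : (5 - m).+1 = 6 - m) 1?(_ : 6 - m.+1 = 5 - m); try lia.
  by have := le_M (inord (5 - m)); have := le_M (inord (6 - m)); lia.
- rewrite branch_perm_center rhoE // (_ : 6 - 3 = 3) //.
  by have := le_M (inord 0); have := le_M (inord 3); lia.
Qed.

End NormalForm.

Lemma T0_normal_form ord (cls : 'I_11 -> 'I_2) :
  injective ord -> strongly_consistent T0_edge ord cls ->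
  exists ord' cls', T0_normal ord' cls'.
Proof.
move=> ord_inj sc; have [pi pi_perm incr] := sorted_branches ord_inj sc.
have [inj_pi sc_pi] := relabel_branches ord_inj sc pi_perm.
case: (ltngtP (ord (branch_perm pi (inord 3))) (ord (branch_perm pi (inord 0)))).
- exact: reverse_branches inj_pi sc_pi incr.
- by move=> center_first; exists (ord \o branch_perm pi), (cls \o branch_perm pi).
- by move/inj_pi/(congr1 (@nat_of_ord _)); rewrite !inordK.
Qed.

Section NormalPlacement.
Variables (ord : 'I_11 -> nat) (cls : 'I_11 -> 'I_2).
Hypothesis normal : T0_normal ord cls.

Let s := sort (fun x y => ord x <= ord y) (enum 'I_11).

Lemma normal_sorted : pairwise (fun x y => ord x < ord y) s.
Proof.
by case: normal => ord_inj *; apply: sort_pairwise_ltn (enum_uniq _) => x y _ _ /ord_inj.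
Qed.

Lemma normal_admissible : cls (head ord0 s) = ord0 ->
  all_prefixes T0_admissible [::] [seq (val x, val (cls x)) | x <- s].
Proof.
case: normal => ord_inj _ incr center_first cls_head.
apply: (all_prefixes_sorted normal_sorted) => x _.
set before := [seq y <- s | ord y < ord x].
have unzipE : unzip1 [seq (val y, val (cls y)) | y <- before] = map val before.
  by rewrite /unzip1 -map_comp.
have before_ord y :
    ord y < ord x -> (y : nat) \in unzip1 [seq (val y, val (cls y)) | y <- before].
  by move=> lt_yx; rewrite unzipE map_f // mem_filter lt_yx mem_sort mem_enum.
apply/and3P; split; apply/implyP => /=.
- move=> /nilP/(congr1 size); rewrite size_map => /size0nil no_before.
  suff -> : x = head ord0 s by rewrite cls_head.
  have : x \in s by rewrite mem_sort mem_enum.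
  move: normal_sorted no_before; rewrite /before.
  case: s => [//|h t] /= /andP[/allP h_first _].
  by rewrite inE => /[swap] /orP[/eqP //|/h_first ->].
- move=> x_mid; have := before_ord (inord x.-1); rewrite inordK; last lia.
  apply; have := incr x.-1 ltac:(lia).
  by rewrite prednK ?inord_val //; lia.
- move=> /eqP x3; have := before_ord (inord 0); rewrite inordK //.
  by apply; rewrite -(inord_val x) x3.
Qed.

End NormalPlacement.

Lemma T0_search_fails : search T0_adj (iota 0 11) 2 T0_admissible 11 [::] = false.
Proof. by vm_cast_no_check (erefl false). Qed.

Lemma T0_not_proper_2_thin : ~ proper_k_thin T0_edge 2.
Proof.
case=> ord1 [cls1 [inj1 sc1]].
have [ord [cls normal]] := T0_normal_form inj1 sc1.
set s := sort (fun x y => ord x <= ord y) (enum 'I_11).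
pose flip : 'I_2 -> 'I_2 := if cls (head ord0 s) == ord0 then id else @rev_ord 2.
have flip_inj : injective flip.
  by rewrite /flip; case: eqP => _; [exact: inj_id | exact: rev_ord_inj].
have flip_head : flip (cls (head ord0 s)) = ord0.
  rewrite /flip; case: eqP => // neq0; apply: val_inj.
  by move: neq0; case: (cls _) => [[|[|m]] lt] // neq0; case: neq0; apply: val_inj.
have normal' : T0_normal ord (flip \o cls).
  by case: normal => *; split=> //; apply: strongly_consistent_relabel.
suff : search T0_adj (iota 0 11) 2 T0_admissible 11 [::] by rewrite T0_search_fails.
have := @search_complete _ T0_adj (iota 0 11) 2 T0_admissible [::]
  [seq (val x, val (flip (cls x))) | x <- s].
rewrite size_map size_sort size_enum_ord; apply.
- by apply/allP => _ /mapP[x _ ->]; rewrite mem_iota !ltn_ord.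
- by rewrite /unzip1 -map_comp (map_inj_uniq val_inj) sort_uniq enum_uniq.
- exact: normal_admissible.
- have [_ sc' _ _] := normal'.
  apply: strongly_consistent_placement sc' (normal_sorted normal') => x y.
  by rewrite T0_edgeE.
Qed.

Lemma TA_proper_thin_ge3 k : proper_k_thin TA_edge k -> 3 <= k.
Proof.
move=> thin; rewrite leqNgt; apply/negP => lt_k3; apply: T0_not_proper_2_thin.
apply: (@proper_thin_induced _ TA_edge _ _ (fun x => Some (ord0, x))).
- by move=> x y [].
- by [].
- by apply: proper_thin_widen thin; lia.
Qed.

Definition copy_vertex (i x : nat) : TA_vertex := Some (inZp i, inZp x).

Definition TA_placement : seq (TA_vertex * nat) :=
  [:: (copy_vertex 0 8, 1); (copy_vertex 0 3, 1); (copy_vertex 0 10, 0); (copy_vertex 0 9, 2);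
      (copy_vertex 0 4, 2); (copy_vertex 0 2, 2); (copy_vertex 0 0, 1); (copy_vertex 0 7, 2);
      (copy_vertex 0 5, 0); (copy_vertex 1 2, 0); (copy_vertex 1 7, 2); (copy_vertex 1 10, 2);
      (copy_vertex 1 5, 2); (copy_vertex 0 1, 1); (copy_vertex 0 6, 1); (copy_vertex 1 1, 2);
      (None, 1); (copy_vertex 1 0, 0); (copy_vertex 1 6, 2); (copy_vertex 2 6, 2);
      (copy_vertex 1 3, 1); (copy_vertex 1 8, 1); (copy_vertex 1 9, 1); (copy_vertex 1 4, 0);
      (copy_vertex 2 2, 1); (copy_vertex 2 7, 0); (copy_vertex 2 0, 1); (copy_vertex 2 4, 0);
      (copy_vertex 2 9, 0); (copy_vertex 2 1, 2); (copy_vertex 2 8, 0); (copy_vertex 2 3, 2);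
      (copy_vertex 2 10, 0); (copy_vertex 2 5, 2)].

Lemma TA_proper_3_thin : proper_k_thin TA_edge 3.
Proof.
have placement_uniq : uniq (unzip1 TA_placement) by vm_compute.
apply: (placement_proper_thin placement_uniq).
- move=> x; have : #|unzip1 TA_placement| = #|{: option ('I_3 * 'I_11)}|.
    by rewrite (card_uniqP placement_uniq) card_option card_prod !card_ord.
  by move/subset_cardP/(_ (subset_predT _))/(_ x) ->.
- by [].
- by vm_cast_no_check (erefl true).
Qed.

Theorem proposition6 : pthin_eq TA_edge 3.
Proof. by split; [exact: TA_proper_3_thin | exact: TA_proper_thin_ge3]. Qed.
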